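(* Let $n$ be one of the integers for which $\mathbb{Z}[\xi_n]$ has class number one, $\mathcal{M}_n=\mathbb{Z}[\xi_n]$, and $I$ a principal ideal of $\mathcal{M}_n$ of finite index. Let $S$ be a $\varphi(n)\times\varphi(n)$ integer matrix whose columns form a generating set of the sublattice $L$ representing $I$, and let $B$ be the matrix representing $\phi_2$, both with respect to the basis $\{1,\xi_n,\dots,\xi_n^{\varphi(n)-1}\}$. For the Bravais coloring of $\mathcal{M}_n$ determined by $I$, the color symmetry group satisfies $H=T(G)\rtimes D_N$ if and only if $S^{-1}BS$ is an integral matrix.
   Context: Standing assumption: $n\in\{3,4,5,7,8,9,11,12,13,15,16,17,19,20,21,24,25,27,28,32,33,35,36,40,44,45,48,60,84\}$ (the values for which $\mathcal{M}_n=\mathbb{Z}[\xi_n]$, $\xi_n=\exp(2\pi i/n)$, is a principal ideal domain). Let $\varphi$ be Euler's function and $N=n$ if $n$ is even, $N=2n$ if $n$ is odd. Using the $\mathbb{Z}$-basis $\{1,\xi_n,\dots,\xi_n^{\varphi(n)-1}\}$ of $\mathcal{M}_n$, each element is identified with its integer coordinate vector, so $\mathcal{M}_n$ becomes a lattice $\Lambda=\mathbb{Z}^{\varphi(n)}\subset\mathbb{R}^{\varphi(n)}$, and a principal ideal $I$ of index $\ell$ becomes a sublattice $L\subseteq\Lambda$ of index $\ell$. Let $\phi_1$ be the linear map of $\mathbb{R}^{\varphi(n)}$ induced by multiplication by $\exp(2\pi i/N)$ (an $N$-fold rotation) and $\phi_2$ the linear map induced by complex conjugation (a reflection); they generate a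 group $D_N$, dihedral of order $2N$. Let $T(G)=\{t_y: x\mapsto x+y \mid y\in\Lambda\}$. The symmetry group of $\Lambda$ is $G=T(G)\rtimes D_N$. The Bravais coloring determined by $I$ assigns to each element of $\Lambda$ one of $\ell$ colors, two elements getting the same color iff they lie in the same coset of $L$ in $\Lambda$. The color symmetry group $H$ is the set of $g\in G$ that permute the colors, i.e. for every coset $x+L$ the image $g(x+L)$ is again a coset of $L$. *)

From HB Require Import structures.
From mathcomp Require Import all_boot all_order all_algebra all_field.
Unset Printing Implicit Defensive.
Import Order.TTheory GRing.Theory Num.Theory.
Local Open Scope ring_scope.

Definition class_number_one_list : seq nat :=
  [:: 3; 4; 5; 7; 8; 9; 11; 12; 13; 15; 16; 17; 19; 20; 21; 24; 25; 27; 28;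
      32; 33; 35; 36; 40; 44; 45; 48; 60; 84]%N.

(* xi k = exp(2 pi i / k): k.-root (-1) is the k-th root of -1 of minimal
   non-negative argument, i.e. exp(i pi / k) (for k > 1); its square is
   exp(2 pi i / k). *)
Definition xi (k : nat) : algC := (k.-root (-1)) ^+ 2.

Definition Ndih (n : nat) : nat := if odd n then (2 * n)%N else n.

Definition emb (n : nat) (v : 'cV[int]_(totient n)) : algC :=
  \sum_(i < totient n) (v i 0)%:~R * xi n ^+ i.

Definition embQ (n : nat) (v : 'cV[rat]_(totient n)) : algC :=
  \sum_(i < totient n) ratr (v i 0) * xi n ^+ i.

Definition inMn (n : nat) (z : algC) : Prop := exists v, z = emb n v.

Definition principal_ideal (n : nat) (I : algC -> Prop) : Prop :=
  exists a, inMn n a /\ forall z, I z <-> exists b, inMn n b /\ z = a * b.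

Definition inL (n : nat) (I : algC -> Prop) (v : 'cV[int]_(totient n)) : Prop :=
  I (emb n v).

Definition finite_index (n : nat) (I : algC -> Prop) : Prop :=
  exists s : seq 'cV[int]_(totient n),
    forall v, exists2 u, u \in s & inL n I (v - u).

(* the element t_y o phi_1^k o phi_2^b of G = T(G) x| D_N, acting on M_n *)
Definition gmap (n : nat) (k : nat) (b : bool) (y : algC) (x : algC) : algC :=
  xi (Ndih n) ^+ k * (if b then x^* else x) + y.

Definition inG (n : nat) (g : algC -> algC) : Prop :=
  exists k b y, inMn n y /\ forall x, inMn n x -> g x = gmap n k b y x.

Definition permutes_colors (n : nat) (I : algC -> Prop) (g : algC -> algC) : Prop :=
  forall x, inMn n x -> exists z, inMn n z /\
    forall w, (exists u, I u /\ w = g (x + u)) <-> (exists u, I u /\ w = z + u).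

Definition inH (n : nat) (I : algC -> Prop) (g : algC -> algC) : Prop :=
  inG n g /\ permutes_colors n I g.

Definition int2rat (x : int) : rat := x%:~R.

From HB Require Import structures.
From mathcomp Require Import all_boot all_order all_algebra all_field.
From mathcomp Require Import ring lra.
Import Order.TTheory GRing.Theory Num.Theory.
Local Open Scope ring_scope.

(* H is all of G exactly when complex conjugation permutes the colours, i.e.
   when I is stable under conjugation: rotations by the unit xi_N and
   translations permute the cosets of any ideal.  In coordinates I is the
   lattice S Z^phi(n) and conjugation acts by B, so I is conjugation-stable iff
   B S Z^phi(n) is contained in S Z^phi(n), i.e. iff S^-1 B S is integral.
   Making this precise needs xi_n = (n.-root (-1))^2 to be a primitive n-th
   root of unity (hence coordinates are unique and Z[xi_n] is a ring closed
   under conjugation) and S to be invertible, which follows from finite index.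
   For the former, a nontrivial N-th root of unity g of maximal real part
   generates all of them: multiplication by g^-1 rotates any other root back by
   the smallest possible angle, which cannot be repeated N times without
   passing through 1. *)

(* On the unit circle, arg_rank x y is a strictly increasing function of the
   argument of x + iy taken in [0, 2pi). *)
Definition arg_rank {R : realFieldType} (x y : R) : R :=
  if 0 <= y then 1 - x else 3 + x.

Lemma arg_rank_rotate_lt (R : realFieldType) (a b x y : R) :
  a ^+ 2 + b ^+ 2 = 1 -> x ^+ 2 + y ^+ 2 = 1 -> 0 <= b -> a < 1 -> x <= a ->
  arg_rank (x * a + y * b) (y * a - x * b) < arg_rank x y.
Proof.
move=> hg hu hb ha hxa.
have hXY : (x * a + y * b) ^+ 2 + (y * a - x * b) ^+ 2 = 1.
  by rewrite -hu -[RHS]mulr1 -hg; ring.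
have hX : -1 <= x * a + y * b.
  have hX2 : (x * a + y * b) ^+ 2 <= 1 by have := sqr_ge0 (y * a - x * b); lra.
  nra.
rewrite /arg_rank; have [hy|hy] := lerP 0 y.
  have lt_xX : x < x * a + y * b.
    have [hx0|hx0] := lerP x 0.
      have [hx1|hx1] := ltrP x 0; first nra.
      have x0 : x = 0 by lra.
      rewrite x0 mul0r add0r; apply: mulr_gt0; nra.
    have ha0 : 0 < a by lra.
    have hb2 : b ^+ 2 <= y ^+ 2 by nra.
    have hby : b <= y by nra.
    have hx2 : 2 * x ^+ 2 < 1 + a by nra.
    have hsq : (x * (1 - a)) ^+ 2 < (y * b) ^+ 2 by nra.
    nra.
  have hY : 0 <= y * a - x * b.
    have hxb : x * b <= a * b by rewrite ler_wpM2r.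
    have [ha0|ha0] := lerP 0 a; last first.
      have hyb2 : y ^+ 2 <= b ^+ 2 by nra.
      have hyb : y <= b by nra.
      nra.
    have [hx0|hx0] := lerP x 0; first nra.
    have hby2 : b ^+ 2 <= y ^+ 2 by nra.
    have hby : b <= y by nra.
    nra.
  by rewrite hY ltrD2l ltrN2.
have hx1 : -1 < x by nra.
have [hY|hY] := lerP 0 (y * a - x * b); first lra.
rewrite ltrD2l.
have [hx0|hx0] := lerP 0 x.
  have hb0 : 0 < b by rewrite lt_def hb andbT; apply/eqP => hb0; nra.
  nra.
have ha0 : 0 < a by nra.
have haX : a * (x * a + y * b) <= x by nra.
nra.
Qed.

Definition Re_algR (u : algC) : algR := in_algR (Creal_Re u).
Definition Im_algR (u : algC) : algR := in_algR (Creal_Im u).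

Lemma unit_circle_Re_Im_algR u : `|u| = 1 -> Re_algR u ^+ 2 + Im_algR u ^+ 2 = 1.
Proof.
by move=> nu; apply: val_inj => /=; rewrite -!expr2 -normC2_Re_Im nu expr1n.
Qed.

Definition argC_rank (u : algC) : algR := arg_rank (Re_algR u) (Im_algR u).

Lemma argC_rank_mulJ_lt (g u : algC) : `|g| = 1 -> `|u| = 1 ->
  0 <= 'Im g -> 'Re g < 1 -> 'Re u <= 'Re g -> argC_rank (u * g^*) < argC_rank u.
Proof.
move=> ng nu Img Reg1 Reug; rewrite /argC_rank.
have -> : Re_algR (u * g^*) = Re_algR u * Re_algR g + Im_algR u * Im_algR g.
  by apply: val_inj; rewrite /= ReM Re_conj Im_conj; ring.
have -> : Im_algR (u * g^*) = Im_algR u * Re_algR g - Re_algR u * Im_algR g.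
  by apply: val_inj; rewrite /= ImM Re_conj Im_conj; ring.
by apply: arg_rank_rotate_lt; rewrite ?unit_circle_Re_Im_algR.
Qed.

Lemma Re_lt1_unit_circle (g : algC) : `|g| = 1 -> g != 1 -> 'Re g < 1.
Proof.
move=> ng g1; rewrite -ng (lt_leif (leif_Re_Creal g)).
by apply: contra g1 => g_ge0; rewrite -(ger0_norm g_ge0) ng.
Qed.

Lemma norm_unity_root {N : nat} {u : algC} : (0 < N)%N -> u ^+ N = 1 -> `|u| = 1.
Proof.
move=> N_gt0 uN; apply/eqP; rewrite -(pexpr_eq1 N_gt0) ?normr_ge0 //.
by rewrite -normrX uN normr1.
Qed.

Section MaxRealPartRoot.

Context {N : nat} {g : algC}.
Hypotheses (N_gt1 : (1 < N)%N) (gN : g ^+ N = 1) (g_neq1 : g != 1).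
Hypothesis Im_g_ge0 : 0 <= 'Im g.
Hypothesis Re_g_max : forall u, u ^+ N = 1 -> u != 1 -> 'Re u <= 'Re g.

Lemma max_Re_root_generates h : h ^+ N = 1 -> exists j, h = g ^+ j.
Proof.
move=> hN; have N_gt0 := ltnW N_gt1; have ng := norm_unity_root N_gt0 gN.
pose s j := h * g^* ^+ j.
have gJN : g^* ^+ N = 1 by rewrite -rmorphXn gN rmorph1.
have sN j : s j ^+ N = 1 by rewrite exprMn hN mul1r exprAC gJN expr1n.
have [/existsP[j /eqP sj1]|] := boolP [exists j : 'I_N, s j == 1].
  have gJg : g^* * g = 1 by rewrite -normCKC ng expr1n.
  exists j; rewrite -[h]mulr1 -(expr1n _ j) -gJg exprMn mulrA.
  by rewrite -/(s j) sj1 mul1r.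
move=> /existsPn s_neq1; exfalso.
have rank_lt j : (j < N)%N -> argC_rank (s j.+1) < argC_rank (s j).
  move=> jN; have sj1 := s_neq1 (Ordinal jN).
  rewrite /s exprSr mulrA; apply: argC_rank_mulJ_lt => //.
  - exact: norm_unity_root N_gt0 (sN j).
  - exact: Re_lt1_unit_circle ng g_neq1.
  - exact: Re_g_max (sN j) sj1.
have rank_lt0 k : (k < N)%N -> argC_rank (s k.+1) < argC_rank (s 0).
  elim: k => [|k IHk] kN; first exact: rank_lt.
  exact: lt_trans (rank_lt _ kN) (IHk (ltnW kN)).
have := rank_lt0 N.-1; rewrite ltn_predL prednK // /s gJN expr0.
by move=> /(_ N_gt0); rewrite ltxx.
Qed.

Lemma max_Re_root_prim : N.-primitive_root g.
Proof.
have N_gt0 := ltnW N_gt1.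
have [z0 z0_prim] := C_prim_root_exists N_gt0.
have [j z0E] := max_Re_root_generates _ (prim_expr_order z0_prim).
have [m g_prim m_dvd_N] := prim_order_exists N_gt0 gN.
suff -> : N = m by [].
apply/eqP; rewrite eqn_dvd m_dvd_N andbT (prim_order_dvd z0_prim) z0E.
by rewrite exprAC (prim_expr_order g_prim) expr1n.
Qed.

End MaxRealPartRoot.

Lemma exists_max_Re_root {N : nat} : (1 < N)%N -> exists g : algC,
  [/\ g ^+ N = 1, g != 1, 0 <= 'Im g &
      forall u, u ^+ N = 1 -> u != 1 -> 'Re u <= 'Re g].
Proof.
move=> N_gt1; have [z0 z0_prim] := C_prim_root_exists (ltnW N_gt1).
have z0XN i : (z0 ^+ i) ^+ N = 1 by rewrite exprAC (prim_expr_order z0_prim) expr1n.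
pose i1 : 'I_N := Ordinal N_gt1.
have [i i_gt0 i_max] := @arg_maxP _ _ _ i1 (fun i : 'I_N => (0 < i)%N)
  (fun i => Re_algR (z0 ^+ i)) isT.
have Re_max u : u ^+ N = 1 -> u != 1 -> 'Re u <= 'Re (z0 ^+ i).
  move=> uN u_neq1; have [k uE] := prim_rootP z0_prim uN.
  rewrite uE; apply: (i_max k); rewrite lt0n; apply: contraNneq u_neq1 => k0.
  by rewrite uE k0 expr0.
have z0X_neq1 : z0 ^+ i != 1 by rewrite -(prim_order_dvd z0_prim) gtnNdvd.
have [Im_ge0|Im_lt0] := real_leP (real0 _) (Creal_Im (z0 ^+ i)).
  by exists (z0 ^+ i); split.
exists (z0 ^+ i)^*; split.
- by rewrite -rmorphXn z0XN rmorph1.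
- by rewrite fmorph_eq1.
- by rewrite Im_conj oppr_ge0 ltW.
- by move=> u uN u_neq1; rewrite Re_conj; exact: Re_max.
Qed.

Lemma rootCN1_prim {n : nat} :
  (1 < n)%N -> (2 * n).-primitive_root (n.-root (-1 : algC)).
Proof.
move=> n_gt1; have n_gt0 := ltnW n_gt1.
have N_gt1 : (1 < 2 * n)%N by rewrite (leq_trans n_gt1) // leq_pmull.
have [g [g2n g_neq1 Im_g_ge0 Re_g_max]] := exists_max_Re_root N_gt1.
have g_prim := max_Re_root_prim N_gt1 g2n g_neq1 Im_g_ge0 Re_g_max.
have gn : g ^+ n = -1.
  have : (g ^+ n) ^+ 2 == 1 by rewrite -exprM mulnC g2n.
  rewrite sqrf_eq1 => /orP[|/eqP//]; rewrite -(prim_order_dvd g_prim).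
  by move=> /(dvdn_leq n_gt0); rewrite leqNgt ltn_Pmull.
set w := n.-root (-1).
have wn : w ^+ n = -1 by rewrite rootCK.
have w2n : w ^+ (2 * n) = 1 by rewrite mulnC exprM wn sqrrN expr1n.
have w_neq1 : w != 1.
  apply/eqP=> w1; move: wn; rewrite w1 expr1n => /eqP.
  by rewrite eq_sym lt_eqF // (lt_trans (ltrN10 _) ltr01).
suff -> : w = g by [].
apply: eqC_semipolar.
- by rewrite (norm_unity_root _ w2n) ?(norm_unity_root _ g2n) ?muln_gt0.
- by apply/le_anti; rewrite Re_g_max ?rootC_Re_max.
- by rewrite mulr_ge0 ?Im_rootC_ge0.
Qed.

Section ColumnPolynomial.

Context {R : nzRingType} {k : nat}.

Definition col_poly (v : 'cV[R]_k) : {poly R} := \sum_(i < k) v i 0 *: 'X^i.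

Lemma coef_col_poly v (i : 'I_k) : (col_poly v)`_i = v i 0.
Proof.
rewrite coef_sum (bigD1 i) //= coefZ coefXn eqxx mulr1 big1 ?addr0 // => j ji.
by rewrite coefZ coefXn eq_sym (negbTE (ji : val j != val i)) mulr0.
Qed.

Lemma size_col_poly v : (size (col_poly v) <= k)%N.
Proof.
apply/leq_sizeP => m km; rewrite coef_sum big1 // => j _.
by rewrite coefZ coefXn gtn_eqF ?mulr0 // (leq_trans (ltn_ord j)).
Qed.

Lemma horner_map_col_poly (S : comNzRingType) (f : {rmorphism R -> S}) v x :
  (map_poly f (col_poly v)).[x] = \sum_(i < k) f (v i 0) * x ^+ i.
Proof.
rewrite rmorph_sum horner_sum; apply: eq_bigr => i _.
by rewrite /= map_polyZ map_polyXn hornerZ hornerXn.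
Qed.

End ColumnPolynomial.

Lemma xi_expr_order {k : nat} : (0 < k)%N -> xi k ^+ k = 1.
Proof. by move=> k_gt0; rewrite /xi exprAC rootCK // sqrrN expr1n. Qed.

Lemma embQ_int n (v : 'cV[int]_(totient n)) : embQ n (map_mx int2rat v) = emb n v.
Proof. by apply: eq_bigr => i _; rewrite mxE ratr_int. Qed.

Section CyclotomicIntegers.

Context {n : nat}.
Hypothesis n_gt1 : (1 < n)%N.

Lemma xi_prim : n.-primitive_root (xi n).
Proof.
have := exp_prim_root (rootCN1_prim n_gt1) 2.
by rewrite (gcdn_idPl (dvdn_mulr n (dvdnn 2))) mulKn.
Qed.

Lemma inMn_polyP z :
  inMn n z <-> exists p : {poly int}, z = (map_poly intr p).[xi n].
Proof.
split=> [[v ->]|[p ->]]; first by exists (col_poly v); rewrite horner_map_col_poly.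
have Phi_xi : (map_poly intr 'Phi_n).[xi n] = 0 :> algC.
  by apply/eqP; rewrite -/(root _ _) (Cintr_Cyclotomic xi_prim) root_cyclotomic xi_prim.
have size_r : (size (p %% 'Phi_n)%R <= totient n)%N.
  by rewrite -ltnS -size_Cyclotomic ltn_modp monic_neq0 ?Cyclotomic_monic.
exists (\col_(i < totient n) (p %% 'Phi_n)`_i).
rewrite {1}(Pdiv.IdomainMonic.divp_eq (Cyclotomic_monic n) p) rmorphD rmorphM.
rewrite hornerD hornerM Phi_xi mulr0 add0r (@horner_coef_wide _ (totient n)); last first.
  by rewrite size_map_inj_poly //; exact: intr_inj.
by apply: eq_bigr => i _; rewrite coef_map mxE.
Qed.

Lemma inMn0 : inMn n 0.
Proof. by exists 0; rewrite /emb big1 // => i _; rewrite mxE mul0r. Qed.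

Lemma inMnD x y : inMn n x -> inMn n y -> inMn n (x + y).
Proof.
move=> /inMn_polyP[p ->] /inMn_polyP[q ->]; apply/inMn_polyP.
by exists (p + q); rewrite rmorphD hornerD.
Qed.

Lemma inMnN x : inMn n x -> inMn n (- x).
Proof.
by move=> /inMn_polyP[p ->]; apply/inMn_polyP; exists (- p); rewrite rmorphN hornerN.
Qed.

Lemma inMnM x y : inMn n x -> inMn n y -> inMn n (x * y).
Proof.
move=> /inMn_polyP[p ->] /inMn_polyP[q ->]; apply/inMn_polyP.
by exists (p * q); rewrite rmorphM hornerM.
Qed.

Lemma inMnX x k : inMn n x -> inMn n (x ^+ k).
Proof.
move=> /inMn_polyP[p ->]; apply/inMn_polyP.
by exists (p ^+ k); rewrite rmorphXn hornerE.
Qed.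

Lemma inMn_xiX k : inMn n (xi n ^+ k).
Proof. by apply/inMn_polyP; exists 'X^k; rewrite map_polyXn hornerXn. Qed.

Lemma conj_xi : (xi n)^* = xi n ^+ n.-1.
Proof.
have xi_norm := norm_unity_root (ltnW n_gt1) (prim_expr_order xi_prim).
apply: (mulfI (x := xi n)); first by rewrite -normr_eq0 xi_norm oner_eq0.
by rewrite -normCK xi_norm expr1n -exprS prednK ?(ltnW n_gt1) // prim_expr_order ?xi_prim.
Qed.

Lemma inMnJ x : inMn n x -> inMn n x^*.
Proof.
move=> /inMn_polyP[p ->]; apply/inMn_polyP; exists (p \Po 'X^(n.-1)).
rewrite map_comp_poly map_polyXn horner_comp hornerXn -conj_xi -horner_map.
rewrite -map_poly_comp; congr (_.[_]).
by apply: eq_map_poly => c; rewrite /= rmorph_int.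
Qed.

Lemma inMn_xi_Ndih : inMn n (xi (Ndih n)).
Proof.
rewrite /Ndih; case: ifP => n_odd; last by rewrite -[xi n]expr1; exact: inMn_xiX.
have xi2n_n : xi (2 * n) ^+ n = -1.
  by rewrite /xi -exprM rootCK // muln_gt0 (ltnW n_gt1).
have /(prim_rootP xi_prim)[i xiE] : (- xi (2 * n)) ^+ n = 1.
  by rewrite exprNn -signr_odd n_odd xi2n_n mulN1r opprK.
by rewrite -[xi _]opprK xiE; exact/inMnN/inMn_xiX.
Qed.

Lemma embQ_inj : injective (embQ n).
Proof.
move=> v w vw; have [p0 [p0E _] p0_dvd] := minCpolyP (xi n).
have size_p0 : size p0 = (totient n).+1.
  rewrite -(size_map_poly (ratr : rat -> algC)) -p0E.
  by rewrite (minCpoly_cyclotomic xi_prim) size_cyclotomic.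
have root_vw : root (map_poly ratr (col_poly (v - w))) (xi n).
  rewrite /root horner_map_col_poly.
  under eq_bigr do rewrite !mxE rmorphB mulrBl.
  by rewrite sumrB -/(embQ n v) -/(embQ n w) vw subrr.
have vw0 : col_poly (v - w) = 0.
  apply/eqP; apply: contraTT root_vw => vw_neq0; rewrite p0_dvd.
  apply/negP => /(dvdp_leq vw_neq0); rewrite size_p0 ltnNge.
  by rewrite (leq_trans (size_col_poly _)).
apply/matrixP => i j; rewrite (ord1 j); apply/eqP; rewrite -subr_eq0.
by have := coef_col_poly (v - w) i; rewrite vw0 coef0 !mxE => <-.
Qed.

End CyclotomicIntegers.

HB.instance Definition _ := GRing.RMorphism.copy int2rat (intr : int -> rat).

Lemma finite_index_multiple (V : zmodType) (L : V -> Prop) (s : seq V) :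
  (forall x y, L x -> L y -> L (x - y)) ->
  (forall v, exists2 u, u \in s & L (v - u)) ->
  forall w, exists2 d, (0 < d)%N & L (w *+ d).
Proof.
move=> LB Lcover w.
have /fin_all_exists[u u_spec] : forall k : 'I_(size s).+1,
    exists u, u \in s /\ L (w *+ k - u).
  by move=> k; have [u us Lu] := Lcover (w *+ k); exists u.
pose f k : 'I_(size s) := Ordinal (etrans (index_mem _ _) (u_spec k).1).
have /injectivePn[k1 [k2 k12 fk]] : ~~ injectiveb f.
  by apply/injectiveP => /leq_card; rewrite !card_ord ltnn.
have u12 : u k1 = u k2.
  have index12 : index (u k1) s = index (u k2) s := congr1 val fk.
  by rewrite -(nth_index 0 (u_spec k1).1) index12 (nth_index 0 (u_spec k2).1).
have L12 k k' : u k = u k' -> L (w *+ k - w *+ k').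
  move=> ukk'; have := LB _ _ (u_spec k).2 (u_spec k').2.
  by rewrite ukk' opprB addrA subrK.
have [lt12|lt21|eq12] := ltngtP k1 k2.
- exists (k2 - k1)%N; first by rewrite subn_gt0.
  by rewrite (mulrnBr _ (ltnW lt12)); apply: L12.
- exists (k1 - k2)%N; first by rewrite subn_gt0.
  by rewrite (mulrnBr _ (ltnW lt21)); apply: L12.
- by move: k12; rewrite (val_inj eq12) eqxx.
Qed.

Lemma lattice_basis_unitmx (m : nat) (S : 'M[int]_m) :
  (forall w : 'cV[int]_m, exists2 d, (0 < d)%N & exists c, w *+ d = S *m c) ->
  map_mx int2rat S \in unitmx.
Proof.
move=> S_multiple.
have /fin_all_exists[dc dc_spec] : forall j : 'I_m,
    exists dc : nat * 'cV[int]_m, (0 < dc.1)%N /\ delta_mx j 0 *+ dc.1 = S *m dc.2.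
  by move=> j; have [d d_gt0 [c Sc]] := S_multiple (delta_mx j 0); exists (d, c).
pose C := \matrix_(i, j) (dc j).2 i 0.
have SC : S *m C = diag_mx (\row_j ((dc j).1)%:R).
  apply/matrixP => i j; rewrite !mxE.
  have -> : \sum_k S i k * C k j = (S *m (dc j).2) i 0.
    by rewrite mxE; apply: eq_bigr => k _; rewrite mxE.
  rewrite -(dc_spec j).2 mulmxnE mxE eqxx andbT.
  by case: eqVneq => [->|]; rewrite ?mulr0n ?mul0rn // mulr1n.
have detS_neq0 : \det S != 0.
  have := congr1 determinant SC; rewrite det_mulmx det_diag.
  apply: contra_eq_neq => ->; rewrite mul0r eq_sym; apply/prodf_neq0 => j _.
  by rewrite mxE pnatr_eq0 -lt0n (dc_spec j).1.
by rewrite unitmxE det_map_mx unitfE /int2rat intr_eq0.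
Qed.

Lemma lattice_stable_iff_int_conj (m : nat) (S : 'M[int]_m) (B : 'M[rat]_m) :
  map_mx int2rat S \in unitmx ->
  (forall c : 'cV[int]_m, exists c' : 'cV[int]_m,
     B *m map_mx int2rat (S *m c) = map_mx int2rat (S *m c')) <->
  exists T : 'M[int]_m,
    map_mx int2rat T = invmx (map_mx int2rat S) *m B *m map_mx int2rat S.
Proof.
set Sq := map_mx int2rat S => S_unit; split=> [stable|[T TE] c].
  have /fin_all_exists[c' c'E] := fun j : 'I_m => stable (delta_mx j 0).
  exists (\matrix_(i, j) c' j i 0); rewrite -mulmxA; apply: (canRL (mulKmx S_unit)).
  have entry (A : 'M[rat]_m) i j : A i j = (A *m delta_mx j (0 : 'I_1)) i 0.
    by rewrite -colE mxE.
  have T_col j : map_mx int2rat (\matrix_(i, k) c' k i 0) *m delta_mx j 0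
      = map_mx int2rat (c' j).
    by rewrite -colE; apply/matrixP => i k; rewrite !mxE (ord1 k).
  apply/matrixP => i j; rewrite entry [RHS]entry -!mulmxA T_col.
  by rewrite -(map_delta_mx int2rat) -!map_mxM c'E.
have Sq_T : Sq *m map_mx int2rat T = B *m Sq.
  by rewrite TE !mulmxA mulmxV // mul1mx.
by exists (T *m c); rewrite !map_mxM !mulmxA Sq_T.
Qed.

Section ColourSymmetry.

Context {n : nat} {I : algC -> Prop}.
Hypotheses (n_gt1 : (1 < n)%N) (I_principal : principal_ideal n I).

Lemma ideal_inMn z : I z -> inMn n z.
Proof.
have [a [Ma IE]] := I_principal.
by move=> /IE[b [Mb ->]]; exact: inMnM.
Qed.

Lemma ideal0 : I 0.
Proof.
have [a [_ IE]] := I_principal.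
by apply/IE; exists 0; rewrite mulr0; split; first exact: inMn0.
Qed.

Lemma idealB x y : I x -> I y -> I (x - y).
Proof.
have [a [_ IE]] := I_principal.
move=> /IE[b [Mb ->]] /IE[c [Mc ->]]; apply/IE; exists (b - c).
by rewrite mulrBr; split => //; apply: inMnD => //; exact: inMnN.
Qed.

Lemma idealMl x y : inMn n x -> I y -> I (x * y).
Proof.
have [a [_ IE]] := I_principal.
move=> Mx /IE[b [Mb ->]]; apply/IE; exists (x * b).
by rewrite mulrCA; split => //; exact: inMnM.
Qed.

Lemma conj_closed_of_conj_permutes_colors :
  permutes_colors n I (fun x => x^*) -> forall z, I z -> I z^*.
Proof.
move=> /(_ 0 inMn0)[w [_ wE]] z Iz.
have [u0 [Iu0 u0E]] : exists u, I u /\ 0 = w + u.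
  by apply/(wE 0); exists 0; split; [exact: ideal0 | rewrite addr0 conjC0].
have [u1 [Iu1 u1E]] : exists u, I u /\ z^* = w + u.
  by apply/(wE z^*); exists z; rewrite add0r.
have -> : z^* = u1 - u0.
  by rewrite u1E addrC; congr (_ + _); apply/eqP; rewrite -addr_eq0 -u0E.
exact: idealB.
Qed.

Lemma conj_closed_permutes_colors g :
  (forall z, I z -> I z^*) -> inG n g -> permutes_colors n I g.
Proof.
move=> I_conj [k [b [y [My gE]]]] x Mx.
set zeta := xi (Ndih n); pose cb (z : algC) := if b then z^* else z.
have Ndih_gt0 : (0 < Ndih n)%N.
  by rewrite /Ndih; case: odd; rewrite ?muln_gt0 (ltnW n_gt1).
have zetaN : zeta ^+ Ndih n = 1 := xi_expr_order Ndih_gt0.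
have Mzeta : inMn n (zeta ^+ k) by apply/inMnX/inMn_xi_Ndih.
have cbD z z' : cb (z + z') = cb z + cb z' by rewrite /cb; case: (b); rewrite ?rmorphD.
have cbK z : cb (cb z) = z by rewrite /cb; case: (b); rewrite ?conjCK.
have cb_inMn z : inMn n z -> inMn n (cb z) by rewrite /cb; case: (b) => // /inMnJ; apply.
have cb_ideal z : I z -> I (cb z) by rewrite /cb; case: (b) => // /I_conj.
have gD u : I u -> g (x + u) = g x + zeta ^+ k * cb u.
  move=> Iu; have Mxu : inMn n (x + u) by apply: inMnD => //; exact: ideal_inMn.
  by rewrite !gE // /gmap -/zeta -!/(cb _) cbD mulrDr addrAC.
exists (g x); split.
  by rewrite gE //; apply: inMnD => //; apply: inMnM => //; exact: cb_inMn.
move=> w; split=> [[u [Iu ->]]|[u [Iu ->]]].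
  exists (zeta ^+ k * cb u); rewrite gD //; split => //.
  by apply: idealMl => //; exact: cb_ideal.
pose u' := cb (zeta ^+ (k * (Ndih n).-1) * u).
have Iu' : I u' by apply: cb_ideal; apply: idealMl => //; exact/inMnX/inMn_xi_Ndih.
exists u'; split => //; rewrite gD // cbK mulrA -exprD -[X in (X + _)%N]muln1 -mulnDr.
by rewrite add1n prednK // mulnC exprM zetaN expr1n mul1r.
Qed.

Lemma conj_in_G : inG n (fun x => x^*).
Proof.
exists 0%N, true, 0; split; first exact: inMn0.
by move=> x _; rewrite /gmap expr0 mul1r addr0.
Qed.

Lemma colour_group_full_iff_conj_closed :
  (forall g, inH n I g <-> inG n g) <-> (forall z, I z -> I z^*).
Proof.
split=> [H_eq_G | I_conj g].
  exact/conj_closed_of_conj_permutes_colors/((H_eq_G _).2 conj_in_G).2.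
by split=> [[]//|Gg]; split => //; exact: conj_closed_permutes_colors.
Qed.

Lemma conj_closed_iff_lattice_stable
    (S : 'M[int]_(totient n)) (B : 'M[rat]_(totient n)) :
  (forall v : 'cV[int]_(totient n), inL n I v <-> exists c, v = S *m c) ->
  (forall v : 'cV[int]_(totient n), embQ n (B *m map_mx int2rat v) = (emb n v)^*) ->
  (forall z, I z -> I z^*) <->
  (forall c : 'cV[int]_(totient n), exists c',
     B *m map_mx int2rat (S *m c) = map_mx int2rat (S *m c')).
Proof.
move=> LE BE; split=> [I_conj c | B_stable z Iz].
  have Ic : I (emb n (S *m c)) by apply/LE; exists c.
  have /ideal_inMn[w wE] := I_conj _ Ic.
  have [c' wE'] : exists c', w = S *m c' by apply/LE; rewrite /inL -wE; exact: I_conj.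
  by exists c'; apply: (embQ_inj n_gt1); rewrite BE wE wE' embQ_int.
have /ideal_inMn[v vE] := Iz.
have [c cE] : exists c, v = S *m c by apply/LE; rewrite /inL -vE.
have [c' Bc] := B_stable c.
have -> : z^* = emb n (S *m c') by rewrite vE -BE cE Bc embQ_int.
by apply/LE; exists c'.
Qed.

End ColourSymmetry.

Theorem corollary3p1p3 (n : nat) (I : algC -> Prop)
    (S : 'M[int]_(totient n)) (B : 'M[rat]_(totient n)) :
  n \in class_number_one_list ->
  principal_ideal n I ->
  finite_index n I ->
  (forall v : 'cV[int]_(totient n),
     inL n I v <-> exists c : 'cV[int]_(totient n), v = S *m c) ->
  (forall v : 'cV[int]_(totient n),
     embQ n (B *m map_mx int2rat v) = (emb n v)^*) ->
  ((forall g, inH n I g <-> inG n g) <->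
   exists T : 'M[int]_(totient n),
     map_mx int2rat T = invmx (map_mx int2rat S) *m B *m map_mx int2rat S).
Proof.
move=> n_in I_principal [s L_cover] LE BE.
have n_gt1 : (1 < n)%N := allP (isT : all (leq 2) class_number_one_list) n n_in.
have S_unit : map_mx int2rat S \in unitmx.
  apply: lattice_basis_unitmx.
  apply: (finite_index_multiple _ (fun v => exists c, v = S *m c) s).
  - by move=> _ _ [c ->] [c' ->]; exists (c - c'); rewrite mulmxBr.
  - by move=> v; have [u us /LE] := L_cover v; exists u.
rewrite (colour_group_full_iff_conj_closed n_gt1 I_principal).
rewrite (conj_closed_iff_lattice_stable n_gt1 I_principal S B LE BE).
exact: lattice_stable_iff_int_conj.
Qed.
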